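(* Let $a,b,c,d,e\in\mathbb{Z}$ all be nonzero, with $a\equiv 0$, $b\equiv -1$, $c\equiv d\equiv 1$, $e\equiv 4\pmod 7$, and let $W\subset(\mathbb{P}^1)^3$ be the smooth, non-degenerate Markoff-type K3 surface over $\mathbb{Q}$ defined by the $(2,2,2)$-form with affine equation $$ax^2y^2z^2 + b(x^2y^2+x^2z^2+y^2z^2) + cxyz + d(x^2+y^2+z^2) + e = 0.$$ Let $U = W\setminus\{rst=0\}$ and $\mathcal{U}$ the integral model of $U$ over $\mathbb{Z}$ defined by the same equation. Then $\mathcal{U}(\mathbb{Z})$ is not Zariski-dense in $U$.
   Context: Coordinates on $(\mathbb{P}^1)^3$ are $([x:r],[y:s],[z:t])$ and the surface is the zero locus of the degree-$(2,2,2)$ bihomogenization. For a form of this shape, non-degenerate means $c\neq 0$, $be\neq d^2$ and $ad\neq b^2$ (equivalently, the projections $\pi_{ij}:W\to\mathbb{P}^1\times\mathbb{P}^1$ to pairs of factors are quasi-finite). $\mathcal{U}(\mathbb{Z})$ is the set of integer solutions $(x,y,z)\in\mathbb{Z}^3$. *)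

From HB Require Import structures.
From mathcomp Require Import all_boot all_order all_algebra all_field.
From mathcomp Require Import mpoly.
Set Implicit Arguments. Unset Strict Implicit. Unset Printing Implicit Defensive.
Import Order.TTheory GRing.Theory Num.Theory.
Local Open Scope ring_scope.

Definition affF (R : comNzRingType) (a b c d e : int) (x y z : R) : R :=
  a%:~R * x^+2 * y^+2 * z^+2
  + b%:~R * (x^+2 * y^+2 + x^+2 * z^+2 + y^+2 * z^+2)
  + c%:~R * x * y * z
  + d%:~R * (x^+2 + y^+2 + z^+2)
  + e%:~R.

(* The (2,2,2)-bihomogenization on (P^1)^3 with coordinates
   ([x:r],[y:s],[z:t]). *)
Definition bihomF (R : comNzRingType) (a b c d e : int) (x r y s z t : R) : R :=
  a%:~R * x^+2 * y^+2 * z^+2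
  + b%:~R * (x^+2 * y^+2 * t^+2 + x^+2 * s^+2 * z^+2 + r^+2 * y^+2 * z^+2)
  + c%:~R * x * y * z * r * s * t
  + d%:~R * (x^+2 * s^+2 * t^+2 + r^+2 * y^+2 * t^+2 + r^+2 * s^+2 * z^+2)
  + e%:~R * r^+2 * s^+2 * t^+2.

Definition dFx (R : comNzRingType) (a b c d e : int) (x r y s z t : R) : R :=
  2%:R * a%:~R * x * y^+2 * z^+2
  + 2%:R * b%:~R * (x * y^+2 * t^+2 + x * s^+2 * z^+2)
  + c%:~R * y * z * r * s * t
  + 2%:R * d%:~R * x * s^+2 * t^+2.
Definition dFr (R : comNzRingType) (a b c d e : int) (x r y s z t : R) : R :=
  2%:R * b%:~R * r * y^+2 * z^+2
  + c%:~R * x * y * z * s * t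
  + 2%:R * d%:~R * (r * y^+2 * t^+2 + r * s^+2 * z^+2)
  + 2%:R * e%:~R * r * s^+2 * t^+2.
Definition dFy (R : comNzRingType) (a b c d e : int) (x r y s z t : R) : R :=
  2%:R * a%:~R * x^+2 * y * z^+2
  + 2%:R * b%:~R * (x^+2 * y * t^+2 + r^+2 * y * z^+2)
  + c%:~R * x * z * r * s * t
  + 2%:R * d%:~R * r^+2 * y * t^+2.
Definition dFs (R : comNzRingType) (a b c d e : int) (x r y s z t : R) : R :=
  2%:R * b%:~R * x^+2 * s * z^+2
  + c%:~R * x * y * z * r * t
  + 2%:R * d%:~R * (x^+2 * s * t^+2 + r^+2 * s * z^+2)
  + 2%:R * e%:~R * r^+2 * s * t^+2.
Definition dFz (R : comNzRingType) (a b c d e : int) (x r y s z t : R) : R :=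
  2%:R * a%:~R * x^+2 * y^+2 * z
  + 2%:R * b%:~R * (x^+2 * s^+2 * z + r^+2 * y^+2 * z)
  + c%:~R * x * y * r * s * t
  + 2%:R * d%:~R * r^+2 * s^+2 * z.
Definition dFt (R : comNzRingType) (a b c d e : int) (x r y s z t : R) : R :=
  2%:R * b%:~R * x^+2 * y^+2 * t
  + c%:~R * x * y * z * r * s
  + 2%:R * d%:~R * (x^+2 * s^+2 * t + r^+2 * y^+2 * t)
  + 2%:R * e%:~R * r^+2 * s^+2 * t.

Definition smoothW (a b c d e : int) : Prop :=
  forall x r y s z t : algC,
    (x != 0) || (r != 0) -> (y != 0) || (s != 0) -> (z != 0) || (t != 0) ->
    bihomF a b c d e x r y s z t = 0 ->
    ~ (dFx a b c d e x r y s z t = 0 /\ dFr a b c d e x r y s z t = 0 /\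
       dFy a b c d e x r y s z t = 0 /\ dFs a b c d e x r y s z t = 0 /\
       dFz a b c d e x r y s z t = 0 /\ dFt a b c d e x r y s z t = 0).

Definition nondegW (a b c d e : int) : Prop :=
  [/\ c != 0, b * e != d ^+ 2 & a * d != b ^+ 2].

Definition intPoint (a b c d e : int) (x y z : int) : Prop :=
  affF a b c d e x y z = 0.

Definition pt3 (R : Type) (x y z : R) : 'I_3 -> R :=
  fun i => match val i with 0%N => x | 1%N => y | _ => z end.

(* The set of integer points is NOT Zariski-dense in U (= the affine surface
   affF = 0 in A^3_Q, i.e. W minus {rst = 0}): some polynomial over Q vanishes
   at all integer points but not identically on U (i.e. is nonzero at some
   geometric point of U). *)
Definition int_points_not_dense (a b c d e : int) : Prop :=
  exists g : {mpoly rat[3]},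
    (forall x y z : int, intPoint a b c d e x y z ->
        g.@[pt3 (x%:~R) (y%:~R) (z%:~R)] = 0)
    /\ exists x y z : algC, affF a b c d e x y z = 0 /\
        (map_mpoly (ratr : rat -> algC) g).@[pt3 x y z] != 0.

(* Since a != 0, the term a x^2 y^2 z^2 dominates the equation once all three
   coordinates exceed L := 3|b| + |c| + 3|d| + |e| in absolute value, so every
   integer point lies on one of the planes x_i = k with |k| <= L, i.e. on the
   zero set of [window_poly].  These planes do not cover U: for a large
   integer N, the point (N, N, z) with z a root of the quadratic
   affF(N, N, z) = 0 lies on U, and z is not a small integer k because
   affF(N, N, k) = (a k^2 + b) N^4 + O(N^2) with a k^2 + b = -1 (mod 7). *)

From HB Require Import structures.
From mathcomp Require Import all_boot all_order all_algebra all_field.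
From mathcomp Require Import mpoly.
From mathcomp Require Import zify ring.
Import Order.TTheory GRing.Theory Num.Theory.
Local Open Scope ring_scope.
Set Implicit Arguments. Unset Strict Implicit.

Definition window (n : nat) : seq int := [seq i%:Z - n%:Z | i <- iota 0 n.*2.+1].

Lemma mem_window n k : (k \in window n) = (`|k| <= n%:Z).
Proof.
apply/mapP/idP => [[i] | kn].
  by rewrite mem_iota => /andP[_ ilt] ->; lia.
exists (absz (k + n%:Z)); first by rewrite mem_iota; lia.
lia.
Qed.

Definition window_poly (R : comNzRingType) (n : nat) : {mpoly R[3]} :=
  \prod_(k <- window n) \prod_(i < 3) ('X_i - (k%:~R)%:MP).

Lemma map_window_poly (R S : comNzRingType) (f : {rmorphism R -> S}) n :
  map_mpoly f (window_poly R n) = window_poly S n.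
Proof.
rewrite rmorph_prod; apply: eq_bigr => k _; rewrite rmorph_prod; apply: eq_bigr => i _.
by rewrite rmorphB /= map_mpolyX map_mpolyC; congr (_ - _%:MP); apply: rmorph_int.
Qed.

Lemma window_polyP (R : idomainType) n (v : 'I_3 -> R) :
  reflect (exists i k, `|k| <= n%:Z /\ v i = k%:~R) ((window_poly R n).@[v] == 0).
Proof.
rewrite /window_poly rmorph_prod prodf_seq_eq0.
apply: (iffP hasP) => [[k kn] | [i [k [kn vik]]]].
  rewrite rmorph_prod /= prodf_seq_eq0 => /hasP[i _].
  by rewrite rmorphB /= mevalXU mevalC subr_eq0 => /eqP vik; exists i, k; rewrite -mem_window.
exists k; first by rewrite mem_window.
rewrite rmorph_prod /= prodf_seq_eq0; apply/hasP; exists i; first exact: mem_index_enum.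
by rewrite rmorphB /= mevalXU mevalC vik subrr.
Qed.

Lemma lower_monomials_small (L u v w : int) : 1 <= L -> L <= u -> L <= v -> L <= w ->
  let P := (u * v * w) ^+ 2 in
  [/\ L * (u * v) ^+ 2 <= P, L * (u * w) ^+ 2 <= P, L * (v * w) ^+ 2 <= P,
      L * (u * v * w) <= P & [/\ L * u ^+ 2 <= P, L * v ^+ 2 <= P, L * w ^+ 2 <= P & L <= P]].
Proof.
move=> L1 Lu Lv Lw P.
have sq t : L <= t -> L <= t ^+ 2 by nia.
have Luv : L <= u * v by nia.
have Luw : L <= u * w by nia.
have Lvw : L <= v * w by nia.
have Luvw : L <= u * v * w by nia.
have cofactor m q : P = q * m -> L <= q -> 0 <= m -> L * m <= P.
  by move=> -> Lq m0; rewrite ler_wpM2r.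
split; [| | | | split].
- by apply: (cofactor _ (w ^+ 2)); rewrite ?sqr_ge0 ?sq // /P; ring.
- by apply: (cofactor _ (v ^+ 2)); rewrite ?sqr_ge0 ?sq // /P; ring.
- by apply: (cofactor _ (u ^+ 2)); rewrite ?sqr_ge0 ?sq // /P; ring.
- by apply: (cofactor _ (u * v * w)); rewrite // /P; lia.
- by apply: (cofactor _ ((v * w) ^+ 2)); rewrite ?sqr_ge0 ?sq // /P; ring.
- by apply: (cofactor _ ((u * w) ^+ 2)); rewrite ?sqr_ge0 ?sq // /P; ring.
- by apply: (cofactor _ ((u * v) ^+ 2)); rewrite ?sqr_ge0 ?sq // /P; ring.
- exact: sq.
Qed.

Definition coord_bound (b c d e : int) : int := 3 * `|b| + `|c| + 3 * `|d| + `|e|.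

Lemma coord_bound_ge0 (b c d e : int) : 0 <= coord_bound b c d e.
Proof. by rewrite /coord_bound !addr_ge0 ?mulr_ge0. Qed.

Lemma affF_split_lead (a b c d e x y z : int) :
  affF a b c d e x y z = a * (x * y * z) ^+ 2 + affF 0 b c d e x y z.
Proof. rewrite /affF !intz; ring. Qed.

Lemma ler_norm_affF (a b c d e x y z : int) :
  `|affF a b c d e x y z| <= affF `|a| `|b| `|c| `|d| `|e| `|x| `|y| `|z|.
Proof.
have normD3 (p q r : int) : `|p + q + r| <= `|p| + `|q| + `|r|.
  by rewrite (le_trans (ler_normD _ _)) // lerD // ler_normD.
rewrite /affF !intz.
do 4 try (apply: (le_trans (ler_normD _ _)); apply: lerD).
all: rewrite ?normrM ?normrX //.
all: by rewrite ler_wpM2l //; apply: (le_trans (normD3 _ _ _)); rewrite ?normrM.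
Qed.

Lemma affF_neq0_large (a b c d e x y z : int) : a != 0 ->
  coord_bound b c d e < `|x| -> coord_bound b c d e < `|y| ->
  coord_bound b c d e < `|z| -> affF a b c d e x y z != 0.
Proof.
rewrite -!lezD1; set L := coord_bound b c d e + 1 => a0 Lx Ly Lz.
have L1 : 1 <= L by rewrite /L lerDr coord_bound_ge0.
have [m1 m2 m3 m4 [m5 m6 m7 m8]] := lower_monomials_small L1 Lx Ly Lz.
set P := (`|x| * `|y| * `|z|) ^+ 2 in m1 m2 m3 m4 m5 m6 m7 m8.
have rest_small : L * affF 0 `|b| `|c| `|d| `|e| `|x| `|y| `|z| <= (L - 1) * P.
  have -> : L * affF 0 `|b| `|c| `|d| `|e| `|x| `|y| `|z|
    = `|b| * (L * (`|x| * `|y|) ^+ 2 + L * (`|x| * `|z|) ^+ 2 + L * (`|y| * `|z|) ^+ 2)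
      + `|c| * (L * (`|x| * `|y| * `|z|))
      + `|d| * (L * `|x| ^+ 2 + L * `|y| ^+ 2 + L * `|z| ^+ 2) + `|e| * L.
    by rewrite /affF !intz; ring.
  have -> : (L - 1) * P = `|b| * (P + P + P) + `|c| * P + `|d| * (P + P + P) + `|e| * P.
    by rewrite /L /coord_bound; ring.
  by apply: lerD (lerD (lerD (ler_wpM2l _ (lerD (lerD m1 m2) m3)) (ler_wpM2l _ m4))
    (ler_wpM2l _ (lerD (lerD m5 m6) m7))) (ler_wpM2l _ m8).
have lead : `|a * (x * y * z) ^+ 2| = `|a| * P by rewrite normrM normrX !normrM.
rewrite affF_split_lead addr_eq0; apply/eqP => lead_eq.
have := ler_norm_affF 0 b c d e x y z; rewrite -normrN -lead_eq lead normr0 => aP_le.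
have a1 : 1 <= `|a| by rewrite -gtz0_ge1 normr_gt0.
have : L * P <= (L - 1) * P.
  apply: (le_trans _ rest_small); rewrite ler_wpM2l ?(le_trans _ L1) //.
  by apply: (le_trans _ aP_le); rewrite ler_peMl ?sqr_ge0.
rewrite mulrBl mul1r lerDl oppr_ge0 => P_le0.
by have := le_trans L1 (le_trans m8 P_le0).
Qed.

Lemma dvdz_ndvdz_addr_neq0 (p a b m : int) :
  (p %| a)%Z -> ~~ (p %| b)%Z -> a * m + b != 0.
Proof.
move=> pa; apply: contra => /eqP sum0.
have -> : b = - (a * m) by apply/eqP; rewrite -addr_eq0 addrC sum0.
by rewrite -mulrN dvdz_mulr.
Qed.

Lemma quadratic_has_root (F : closedFieldType) (A B C : F) :
  A != 0 -> exists z, A * z ^+ 2 + B * z + C = 0.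
Proof.
move=> A0; have [z zE] := @solve_monicpoly F 2 (nth 0 [:: - (C / A); - (B / A)]) isT.
exists z; move: zE; rewrite !big_ord_recr big_ord0 /= add0r expr0 mulr1 expr1 => ->.
by field.
Qed.

Lemma biquadratic_neq0 (al be ga N : int) :
  al != 0 -> `|be| + `|ga| < N -> al * N ^+ 4 + be * N ^+ 2 + ga != 0.
Proof.
move=> al0 N_gt.
have N1 : 1 <= N by rewrite -gtz0_ge1 (le_lt_trans _ N_gt) ?addr_ge0.
have al1 : 1 <= `|al| by rewrite -gtz0_ge1 normr_gt0.
have low : `|be * N ^+ 2 + ga| < N ^+ 4.
  apply: (le_lt_trans (ler_normD _ _)); rewrite normrM normrX (ger0_norm (le_trans _ N1)) //.
  have N2 : N <= N ^+ 2 by rewrite expr2 ler_peMl // (le_trans _ N1).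
  rewrite -[4%N]/(2 + 2)%N exprD.
  move: (N ^+ 2) N2 => M NM.
  have M1 : 1 <= M := le_trans N1 NM.
  apply: (@le_lt_trans _ _ ((`|be| + `|ga|) * M)).
    by rewrite mulrDl lerD2l ler_peMr.
  by rewrite ltr_pM2r ?(lt_le_trans _ NM) ?(lt_le_trans _ M1).
apply: contraTneq low => /eqP; rewrite -addrA addr_eq0 eq_sym eqr_oppLR => /eqP ->.
rewrite normrN normrM normrX (ger0_norm (le_trans _ N1)) // -leNgt.
by rewrite ler_peMl ?exprn_ge0 ?(le_trans _ N1).
Qed.

Lemma affF_int (R : comNzRingType) (a b c d e x y z : int) :
  affF a b c d e (x%:~R : R) y%:~R z%:~R = (affF a b c d e x y z)%:~R.
Proof. by rewrite /affF !intz !(rmorphD, rmorphM, rmorphXn). Qed.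

Lemma affF_diag (R : comNzRingType) (a b c d e N : int) (z : R) :
  affF a b c d e N%:~R N%:~R z =
  (a * N ^+ 4 + 2 * b * N ^+ 2 + d)%:~R * z ^+ 2 + (c * N ^+ 2)%:~R * z
  + (b * N ^+ 4 + 2 * d * N ^+ 2 + e)%:~R.
Proof. rewrite /affF !(rmorphD, rmorphM, rmorphXn) /=; ring. Qed.

Lemma affF_diag_int (a b c d e N k : int) :
  affF a b c d e N N k =
  (a * k ^+ 2 + b) * N ^+ 4 + (2 * b * k ^+ 2 + c * k + 2 * d) * N ^+ 2 + (d * k ^+ 2 + e).
Proof. rewrite /affF !intz; ring. Qed.

Lemma ler_norm_column_coeffs (b c d e k K : int) :
  1 <= K -> `|k| <= K -> `|k| ^+ 2 <= K ->
  `|2 * b * k ^+ 2 + c * k + 2 * d| + `|d * k ^+ 2 + e| <= coord_bound b c d e * K.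
Proof.
move=> K1 k_le k2_le.
have tri1 : `|2 * b * k ^+ 2 + c * k + 2 * d| <= 2 * `|b| * `|k| ^+ 2 + `|c| * `|k| + 2 * `|d|.
  by do 2 try (apply: (le_trans (ler_normD _ _)); apply: lerD); rewrite ?normrM ?normrX.
have tri2 : `|d * k ^+ 2 + e| <= `|d| * `|k| ^+ 2 + `|e|.
  by apply: (le_trans (ler_normD _ _)); rewrite normrM normrX.
have bK : `|b| * `|k| ^+ 2 <= `|b| * K by rewrite ler_wpM2l.
have cK : `|c| * `|k| <= `|c| * K by rewrite ler_wpM2l.
have dK : `|d| * `|k| ^+ 2 <= `|d| * K by rewrite ler_wpM2l.
have d1 : `|d| <= `|d| * K by rewrite ler_peMr.
have e1 : `|e| <= `|e| * K by rewrite ler_peMr.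
have b0 : 0 <= `|b| * K by rewrite mulr_ge0 ?(le_trans _ K1).
rewrite /coord_bound; move: tri1 tri2 bK cK dK d1 e1 b0; clear; lia.
Qed.

Lemma far_point (a b c d e L : int) :
  a != 0 -> (forall k : int, a * k ^+ 2 + b != 0) -> 0 <= L ->
  exists x y z : algC, affF a b c d e x y z = 0 /\
    forall k : int, `|k| <= L -> [/\ x != k%:~R, y != k%:~R & z != k%:~R].
Proof.
move=> a0 lead_neq0 L0.
set C := coord_bound b c d e; set K := (L + 1) ^+ 2; pose N := (C + 1) * K.
have C0 : 0 <= C := coord_bound_ge0 b c d e.
have L1K : L + 1 <= K by rewrite /K; nia.
have K1 : 1 <= K by lia.
have lt_N m : m <= C * K -> m < N.
  by move=> mle; apply: (le_lt_trans mle); rewrite /N (mulrDl C 1 K) mul1r ltrDl (lt_le_trans _ K1).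
have N_gt_L : L < N.
  have K_le_N : K <= N by rewrite /N; nia.
  lia.
have N_gt_A : `|2 * b| + `|d| < N.
  by apply: lt_N; rewrite (le_trans _ (ler_peMr _ K1)) // /C /coord_bound; lia.
have N_gt_col k : `|k| <= L -> `|2 * b * k ^+ 2 + c * k + 2 * d| + `|d * k ^+ 2 + e| < N.
  by move=> kL; apply/lt_N/ler_norm_column_coeffs => //; rewrite /K; nia.
have [z z_root] : exists z : algC,
    (a * N ^+ 4 + 2 * b * N ^+ 2 + d)%:~R * z ^+ 2 + (c * N ^+ 2)%:~R * z
    + (b * N ^+ 4 + 2 * d * N ^+ 2 + e)%:~R = 0.
  by apply: quadratic_has_root; rewrite intr_eq0 biquadratic_neq0.
exists N%:~R, N%:~R, z; split; first by rewrite affF_diag.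
move=> k kL; have N_neq_k : (N%:~R : algC) != k%:~R.
  by rewrite eqr_int; apply: contraTneq kL => <-; rewrite -ltNge (lt_le_trans N_gt_L) ?ler_norm.
split => //; apply: contraNneq (biquadratic_neq0 (lead_neq0 k) (N_gt_col k kL)) => z_k.
by rewrite -affF_diag_int -(intr_eq0 algC) -affF_int -z_k affF_diag z_root.
Qed.

Theorem proposition6p1 (a b c d e : int) :
  a != 0 -> b != 0 -> c != 0 -> d != 0 -> e != 0 ->
  (a == 0 %[mod 7])%Z -> (b == -1 %[mod 7])%Z ->
  (c == 1 %[mod 7])%Z -> (d == 1 %[mod 7])%Z -> (e == 4 %[mod 7])%Z ->
  smoothW a b c d e -> nondegW a b c d e ->
  int_points_not_dense a b c d e.
Proof.
move=> a0 _ _ _ _ a7 b7 _ _ _ _ _.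
have lead_neq0 k : a * k ^+ 2 + b != 0.
  apply: (@dvdz_ndvdz_addr_neq0 7).
    by apply/dvdz_mod0P; rewrite (eqP a7).
  by apply/negP => /dvdz_mod0P; rewrite (eqP b7).
set L := coord_bound b c d e; have L0 : 0 <= L := coord_bound_ge0 b c d e.
have nE : (absz L)%:Z = L by rewrite gez0_abs.
exists (window_poly rat (absz L)); split.
  move=> x y z xyz; apply/eqP/window_polyP.
  have : ~~ [&& L < `|x|, L < `|y| & L < `|z|].
    by apply: contra_eqN xyz => /and3P[Lx Ly Lz]; apply: affF_neq0_large.
  rewrite !negb_and -!leNgt nE => /or3P[xL|yL|zL].
  - by exists 0, x.
  - by exists 1, y.
  - by exists 2, z.
have [x [y [z [xyz far]]]] := far_point c d e a0 lead_neq0 L0.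
exists x, y, z; split => //.
rewrite map_window_poly; apply/negP => /window_polyP[i [k [kL]]].
rewrite nE in kL; have [nx ny nz] := far k kL.
case: i => [[|[|[|m]]] ?] //; rewrite /pt3 /= => ik.
all: by rewrite ik eqxx in nx ny nz.
Qed.
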